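(* Let $\zeta$ be a nonconstant (holomorphic or formal) curve with $\zeta(0)=0$, let $\nu=\nu(\zeta)$ and let $k\geq 1$ be an integer. If $j_{2k\nu}(\zeta^*r)=0$, then there is a unitary infinite matrix $U_k\in\mathcal M_1$ (indeed $U_k\in\mathcal M_{1,N}$ for some $N$) such that $j_{2k\nu}(\zeta^*h)=0$ and $j_{k\nu}(\zeta^*(f-U_kg))=0$ (componentwise).
   Context: $r$ is a real $\mathcal C^\infty$ defining function of a hypersurface through $0\in\mathbb C^n$ ($r(0)=0$, $dr(0)\ne0$). Order the nonzero multi-indices $J\in\mathbb N^n$ by $J<K$ iff $|J|<|K|$, or $|J|=|K|$ and $J$ precedes $K$ lexicographically; enumerate them increasingly as $J^{(1)},J^{(2)},\dots$. Write the formal Taylor series of $r$ at $0$ as $r\sim 2\,\mathrm{Re}\,h+4\,\mathrm{Re}\sum_{J}\sum_{K\ge J}a_{JK}z^J\bar z^K$ ($J,K$ nonzero), with $h$ a formal holomorphic power series, $h(0)=0$, $a_{JK}\in\mathbb C$. Set $f_J=z^J+\sum_{K\ge J}\overline{a_{JK}}z^K$, $g_J=z^J-\sum_{K\ge J}\overline{a_{JK}}z^K$; then formally $r\sim 2\,\mathrm{Re}\,h+\sum_J|f_J|^2-\sum_J|g_J|^2$, and $f=(f_{J^{(m)}})_{m\ge1}$, $g=(g_{J^{(m)}})_{m\ge1}$ are viewed as infinite column vectors. For a formal power series $\varphi$ in $t,\bar t$ (or in $t$), $j_m(\varphi)$ is its truncation to terms of total degree $\le m$; $\zeta^*\varphi=\varphi\circ\zeta$.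 $\nu(\zeta)$ is the order of vanishing of $\zeta$ at $0$. $\mathcal M$ is the set of infinite complex matrices $\{a_{ij}\}_{i,j\ge1}$, products defined by $c_{i\ell}=\sum_k a_{ik}b_{k\ell}$ when convergent; $A^*=\{\overline{a_{ji}}\}$; $\mathcal M_1$ is the set of unitary ones ($AA^*=A^*A=I$); $\mathcal M_{1,N}\subset\mathcal M_1$ consists of those with $a_{ij}=\delta_{ij}$ whenever $\max\{i,j\}>N$. For $U\in\mathcal M_1$, $(Ug)_i=\sum_m U_{im}g_m$. *)

From HB Require Import structures.
From mathcomp Require Import all_boot all_order all_algebra.
Set Implicit Arguments. Unset Strict Implicit. Unset Printing Implicit Defensive.
Import Order.TTheory GRing.Theory Num.Theory.
Local Open Scope ring_scope.

(* Multi-indices in N^n are represented as lists of naturals of length n. *)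

Fixpoint deg_list (n d : nat) : seq (seq nat) :=
  match n with
  | 0 => if d == 0%N then [:: [::]] else [::]
  | n'.+1 => flatten [seq [seq a :: s | s <- deg_list n' (d - a)] | a <- iota 0 d.+1]
  end.

Definition mi_upto (n p : nat) : seq (seq nat) :=
  flatten [seq deg_list n d | d <- iota 0 p.+1].

Fixpoint lex_le (s t : seq nat) : bool :=
  match s, t with
  | [::], _ => true
  | _ :: _, [::] => false
  | x :: s', y :: t' => (x < y)%N || ((x == y) && lex_le s' t')
  end.

Definition mi_le (J K : seq nat) : bool :=
  (sumn J < sumn K)%N || ((sumn J == sumn K) && lex_le J K).

(** Enumeration of the nonzero multi-indices in increasing order.
    0-based: [mi_enum n m] is J^(m+1) of the paper (for n >= 1). *)
Definition mi_enum (n m : nat) : seq nat :=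
  nth [::] (flatten [seq deg_list n d | d <- iota 1 m.+1]) m.

Section Series.
Variable C : numClosedFieldType.

(** Formal power series in one variable t: coefficient functions nat -> C. *)
Definition sone : nat -> C := fun p => (p == 0%N)%:R.
Definition smul (f g : nat -> C) : nat -> C :=
  fun p => \sum_(i < p.+1) f i * g (p - i)%N.
Definition spow (f : nat -> C) (e : nat) : nat -> C := iter e (smul f) sone.

Variable n : nat.

Definition zpow (zeta : 'I_n -> nat -> C) (J : seq nat) : nat -> C :=
  \big[smul/sone]_(i < n) spow (zeta i) (nth 0%N J i).

(** Pullback zeta^* F of a formal holomorphic series F = sum_K F K z^K,
    coefficient of t^p.  Since zeta(0) = 0, zeta^K has order >= |K|, so only
    |K| <= p contributes. *)
Definition pull1 (zeta : 'I_n -> nat -> C) (F : seq nat -> C) (p : nat) : C :=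
  \sum_(K <- mi_upto n p) F K * zpow zeta K p.

(** Pullback zeta^* R of a formal series R = sum_{J,K} R J K z^J zbar^K,
    coefficient of t^p tbar^q. *)
Definition pull2 (zeta : 'I_n -> nat -> C) (R : seq nat -> seq nat -> C)
    (p q : nat) : C :=
  \sum_(J <- mi_upto n p) \sum_(K <- mi_upto n q)
     R J K * zpow zeta J p * (zpow zeta K q)^*.

(** The formal Taylor series of r:
    r ~ 2 Re h + 4 Re sum_{J nonzero} sum_{K >= J} a_{JK} z^J zbar^K.
    Coefficient of z^J zbar^K. *)
Definition rser (h : seq nat -> C) (a : seq nat -> seq nat -> C)
    (J K : seq nat) : C :=
  (if sumn K == 0%N then h J else 0)
  + (if sumn J == 0%N then (h K)^* else 0)
  + (if (sumn J != 0%N) && (sumn K != 0%N) then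
       2%:R * (if mi_le J K then a J K else 0)
       + 2%:R * (if mi_le K J then (a K J)^* else 0)
     else 0).

Definition fser (a : seq nat -> seq nat -> C) (J K : seq nat) : C :=
  (K == J)%:R + (if mi_le J K then (a J K)^* else 0).

Definition gser (a : seq nat -> seq nat -> C) (J K : seq nat) : C :=
  (K == J)%:R - (if mi_le J K then (a J K)^* else 0).

(** Infinite matrices (0-based indices: entry (i,j) is a_{i+1,j+1} of the paper). *)
Definition inf_matrix := nat -> nat -> C.

(** U is in M_{1,N}: a_{ij} = delta_{ij} whenever max(i,j) > N (1-based),
    and U is unitary: U U^* = U^* U = I.  For such U all the (infinite) sums
    in the products have only the terms with index < max(N, i+1, l+1), so the
    sums below are the full products. *)
Definition in_M1N (N : nat) (U : inf_matrix) : Prop :=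
  (forall i j, (N <= maxn i j)%N -> U i j = (i == j)%:R)
  /\ (forall i l, \sum_(m < maxn N (maxn i l).+1) U i m * (U l m)^* = (i == l)%:R)
  /\ (forall i l, \sum_(m < maxn N (maxn i l).+1) (U m i)^* * U m l = (i == l)%:R).

(** (f - U g)_i (0-based i), as a formal holomorphic series; for U in M_{1,N}
    the sum (Ug)_i = sum_m U_{im} g_m has nonzero terms only for m < max(N,i+1). *)
Definition fUg (a : seq nat -> seq nat -> C) (N : nat) (U : inf_matrix)
    (i : nat) (K : seq nat) : C :=
  fser a (mi_enum n i) K
  - \sum_(m < maxn N i.+1) U i m * gser a (mi_enum n m) K.

Definition vanishing_order (zeta : 'I_n -> nat -> C) (nu : nat) : Prop :=
  (exists i : 'I_n, zeta i nu != 0) /\ (forall (i : 'I_n) p, (p < nu)%N -> zeta i p = 0).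

End Series.

From HB Require Import structures.
From mathcomp Require Import all_boot all_order all_algebra ring.
Set Implicit Arguments. Unset Strict Implicit. Unset Printing Implicit Defensive.
Import Order.TTheory GRing.Theory Num.Theory.
Local Open Scope ring_scope.

(* Let X(p) denote the coefficient of t^p in zeta^* X and write f_J = z^J + w_J,
   g_J = z^J - w_J.  Polarization gives
     f_J(p) conj f_J(q) - g_J(p) conj g_J(q) = 2 (z^J(p) conj w_J(q) + w_J(p) conj z^J(q)),
   and for p, q > 0 the sum over J of the right-hand side is the coefficient of t^p tbar^q
   in zeta^* r.  Since zeta^J vanishes to order |J| nu, only the finitely many J with
   1 <= |J| <= k matter for p, q <= k nu.  Hence j_{2k nu}(zeta^* r) = 0 says that the finite
   matrices F = (f_J(p)) and G = (g_J(p)), with rows p <= k nu, have the same Gram matrix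
   F F^* = G G^*, so F = G V for a unitary V; extending V^T by the identity gives U_k.
   Taking q = 0 yields j_{2k nu}(zeta^* h) = 0. *)

Section FormalSeries.
Variable C : numClosedFieldType.

Definition vanish_below (f : nat -> C) (m : nat) := forall p, (p < m)%N -> f p = 0.

Lemma smul_vanish f g a b :
  vanish_below f a -> vanish_below g b -> vanish_below (smul f g) (a + b).
Proof.
move=> f0 g0 p ltp; rewrite /smul big1 // => i _.
have lei : (i <= p)%N by rewrite -ltnS.
case: (ltnP i a) => [/f0 -> | leai]; first by rewrite mul0r.
by rewrite g0 ?mulr0 // ltn_subLR // (leq_trans ltp) // leq_add2r.
Qed.

Lemma spow_vanish f m e : vanish_below f m -> vanish_below (spow f e) (e * m).
Proof.
move=> f0; elim: e => [|e IH] /=; first by [].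
by rewrite mulSn; apply: smul_vanish.
Qed.

Lemma big_smul_vanish l (F : 'I_l -> nat -> C) (m : 'I_l -> nat) :
  (forall i, vanish_below (F i) (m i)) ->
  vanish_below (\big[@smul C/@sone C]_(i < l) F i) (\sum_(i < l) m i).
Proof.
elim: l F m => [|l IH] F m F0; first by move=> p; rewrite big_ord0.
rewrite big_ord_recl [X in vanish_below _ X]big_ord_recl.
by apply: smul_vanish => //; apply: IH => i.
Qed.

Lemma smul1s (f : nat -> C) p : smul (@sone C) f p = f p.
Proof.
rewrite /smul big_ord_recl /sone /= mul1r subn0 big1 ?addr0 // => i _.
by rewrite mul0r.
Qed.

Lemma big_smul_sone l p : (\big[@smul C/@sone C]_(i < l) @sone C) p = @sone C p.
Proof. by elim: l p => [|l IH] p; rewrite ?big_ord0 // big_ord_recl smul1s. Qed.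

Variables (n : nat) (zeta : 'I_n -> nat -> C).

Lemma zpow_vanish nu J : (forall i, vanish_below (zeta i) nu) -> size J = n ->
  vanish_below (zpow zeta J) (sumn J * nu).
Proof.
move=> zeta_vanish size_J; rewrite /zpow sumnE (big_nth 0%N) size_J big_mkord big_distrl /=.
by apply: big_smul_vanish => i; apply: spow_vanish.
Qed.

Lemma zpow_nseq0 m p : zpow zeta (nseq m 0%N) p = @sone C p.
Proof.
rewrite /zpow -(big_smul_sone n p); congr (_ p); apply: eq_bigr => i _.
by rewrite nth_nseq if_same.
Qed.

End FormalSeries.
Section MultiIndices.
Local Open Scope nat_scope.

Lemma mem_deg_list n d J : J \in deg_list n d -> size J = n /\ sumn J = d.
Proof.
elim: n d J => [|n IH] d J.
  by rewrite /=; case: (d =P 0) => // ->; rewrite inE => /eqP ->.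
move/flatten_mapP => [x]; rewrite mem_iota ltnS => /andP [_ lexd] /mapP [s /IH [<- sum_s] ->].
by rewrite /= sum_s subnKC.
Qed.

Lemma deg_list0 n : deg_list n 0 = [:: nseq n 0].
Proof. by elim: n => //= n ->. Qed.

Lemma sumn_iota_pred1 m l x (g : nat -> nat) :
  sumn [seq (a == x) * g a | a <- iota m l] = (m <= x < m + l) * g x.
Proof.
elim: l m => [|l IH] m /=; first by rewrite addn0; case: leqP => // /ltn_geF ->.
rewrite IH addSnnS; case: (eqVneq m x) => [->|neq_mx] /=.
  by rewrite ltnn leqnn addnS ltnS leq_addr !mul1n mul0n addn0.
by rewrite mul0n add0n ltn_neqAle neq_mx.
Qed.

Lemma count_deg_list n d J : size J = n -> count_mem J (deg_list n d) = (d == sumn J).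
Proof.
elim: n d J => [|n IH] d [|x s] //; first by rewrite /=; case: (d == 0).
case=> size_s; rewrite count_flatten -map_comp.
rewrite (eq_map (g := fun a => (a == x) * (d - a == sumn s))); last first.
  move=> a; rewrite /comp count_map -(IH (d - a) s size_s).
  case: (eqVneq a x) => [->|neq_ax].
    by rewrite mul1n; apply: eq_count => t; rewrite /= eqseq_cons eqxx.
  by rewrite (@eq_count _ _ pred0) ?count_pred0 // => t; rewrite /= eqseq_cons (negbTE neq_ax).
rewrite sumn_iota_pred1 add0n ltnS; case: (leqP x d) => [lexd|ltdx] /=.
  by rewrite mul1n -(eqn_add2l x) subnKC.
by rewrite mul0n; case: eqP => // eqd; move: ltdx; rewrite eqd ltnNge leq_addr.
Qed.

Lemma deg_list_neq_nil n d : 0 < n -> deg_list n d != [::].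
Proof.
case: n => // n _; apply/eqP => nil_dl.
have := @count_deg_list n.+1 d (d :: nseq n 0).
by rewrite nil_dl /= size_nseq sumn_nseq mul0n addn0 eqxx => /(_ erefl).
Qed.

Definition mi_range n a l := flatten [seq deg_list n d | d <- iota a l].

Lemma mem_mi_range n a l J : J \in mi_range n a l -> size J = n /\ a <= sumn J < a + l.
Proof. by move/flatten_mapP => [d]; rewrite mem_iota => ? /mem_deg_list [-> ->]. Qed.

Lemma mi_rangeD n a l1 l2 :
  mi_range n a (l1 + l2) = mi_range n a l1 ++ mi_range n (a + l1) l2.
Proof. by rewrite /mi_range iotaD map_cat flatten_cat. Qed.

Lemma size_mi_range n a l : 0 < n -> l <= size (mi_range n a l).
Proof.
move=> n_gt0; elim: l => // l IH.
rewrite -addn1 mi_rangeD size_cat leq_add // /mi_range /= cats0 lt0n size_eq0.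
exact: deg_list_neq_nil.
Qed.

Lemma count_mi_upto n p J : size J = n -> count_mem J (mi_upto n p) = (sumn J <= p).
Proof.
move=> size_J; rewrite count_flatten -map_comp.
rewrite (eq_map (g := fun d => (d == sumn J) * 1)); last first.
  by move=> d /=; rewrite count_deg_list // muln1.
by rewrite sumn_iota_pred1 add0n ltnS muln1.
Qed.

Lemma mem_mi_upto n p K : K \in mi_upto n p -> size K = n /\ sumn K <= p.
Proof. by case/mem_mi_range => -> /andP [_]; rewrite add0n ltnS. Qed.

Lemma nth_mi_range_prefix n a l1 l2 i : i < size (mi_range n a l1) ->
  nth [::] (mi_range n a (l1 + l2)) i = nth [::] (mi_range n a l1) i.
Proof. by move=> lti; rewrite mi_rangeD nth_cat lti. Qed.

Lemma mi_enum_nth n k i : 0 < n -> i < size (mi_range n 1 k) ->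
  mi_enum n i = nth [::] (mi_range n 1 k) i.
Proof.
move=> n_gt0 lti; rewrite /mi_enum -/(mi_range n 1 i.+1).
case: (leqP k i.+1) => [leki|ltik].
  by rewrite -(subnKC leki) nth_mi_range_prefix.
rewrite -(subnKC (ltnW ltik)) nth_mi_range_prefix //.
exact: leq_trans (size_mi_range _ _ n_gt0).
Qed.

Lemma mi_enum_gt n k i : 0 < n -> size (mi_range n 1 k) <= i ->
  size (mi_enum n i) = n /\ k < sumn (mi_enum n i).
Proof.
move=> n_gt0 lei.
have leki : k <= i.+1 := leq_trans (size_mi_range 1 k n_gt0) (leqW lei).
have lti : i < size (mi_range n 1 (k + (i.+1 - k))) by rewrite subnKC // size_mi_range.
rewrite /mi_enum -/(mi_range n 1 i.+1) -(subnKC leki).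
rewrite mi_rangeD nth_cat ltnNge lei /=.
move: lti; rewrite mi_rangeD size_cat -ltn_subLR //.
by move=> /(mem_nth [::]) /mem_mi_range [-> /andP []]; rewrite add1n.
Qed.

Lemma mi_le_sumn J K : mi_le J K -> sumn J <= sumn K.
Proof. by case/orP => [/ltnW | /andP [/eqP -> _]]. Qed.

End MultiIndices.

Lemma big_seq_delta (R : pzSemiRingType) (T : eqType) (s : seq T) j (F : T -> R) :
  \sum_(i <- s) (i == j)%:R * F i = (count_mem j s)%:R * F j.
Proof.
elim: s => [|i s IH]; first by rewrite big_nil mul0r.
rewrite big_cons IH /=; case: (eqVneq i j) => [->|_]; last by rewrite mul0r add0r.
by rewrite natrD mulrDl mul1r.
Qed.

Lemma conj_polarization (C : numClosedFieldType) (x y u v : C) :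
  (x + y) * (u + v)^* - (x - y) * (u - v)^* = 2 * (x * v^* + y * u^*).
Proof. by rewrite rmorphD rmorphB /=; ring. Qed.

Section Pullback.
Variables (C : numClosedFieldType) (n : nat) (zeta : 'I_n -> nat -> C) (nu : nat).
Hypothesis zeta_vanish : forall i, vanish_below (zeta i) nu.
Hypothesis nu_gt0 : (0 < nu)%N.

Local Notation z := (zpow zeta).

Lemma zpow_eq0 J p : size J = n -> (p < sumn J * nu)%N -> z J p = 0.
Proof. by move=> size_J; apply: zpow_vanish. Qed.

Lemma zpow_eq0_deg J p : size J = n -> (p < sumn J)%N -> z J p = 0.
Proof. by move=> size_J ltp; rewrite zpow_eq0 // (leq_trans ltp) ?leq_pmulr. Qed.

Lemma zpow_deg0 J p : sumn J = 0%N -> (0 < p)%N -> z J p = 0.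
Proof.
move=> /eqP /natnseq0P ->.
by rewrite zpow_nseq0 /sone; case: p.
Qed.

(* Only the degrees d with 0 < d and d * nu <= r contribute to the coefficient of t^r. *)
Lemma big_mi_range_supp (phi : seq nat -> C) r a l M :
  (0 < r)%N -> (a <= 1)%N -> (r < (a + l) * nu)%N -> (a + l <= M)%N ->
  (forall J, size J = n -> z J r = 0 -> phi J = 0) ->
  \sum_(J <- mi_range n a l) phi J = \sum_(J <- mi_range n 0 M) phi J.
Proof.
move=> r_gt0 le_a1 lt_r leM phi0.
have deg_out d : (d == 0)%N || (a + l <= d)%N -> \sum_(J <- deg_list n d) phi J = 0.
  move=> out_d; rewrite big1_seq // => J /andP [_ /mem_deg_list [size_J sum_J]].
  apply: phi0 => //; case/orP: out_d => [/eqP d0 | le_d]; first by rewrite zpow_deg0 ?sum_J.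
  by rewrite zpow_eq0 // sum_J (leq_trans lt_r) // leq_mul2r le_d orbT.
rewrite /mi_range !big_flatten !big_map /= -(subnKC leM) iotaD big_cat /=.
rewrite [X in _ = _ + X]big1_seq ?addr0; last first.
  by move=> d /andP [_]; rewrite mem_iota add0n => /andP [le_d _]; rewrite deg_out // le_d orbT.
rewrite iotaD big_cat /= add0n [X in _ = X + _]big1_seq ?add0r //.
move=> d /andP [_]; rewrite mem_iota add0n => /andP [_ lt_da]; apply: deg_out.
by case: d lt_da => // d /leq_trans /(_ le_a1).
Qed.

Lemma big_mi_range_upto (phi : seq nat -> C) r k :
  (0 < r)%N -> (r <= k * nu)%N ->
  (forall J, size J = n -> z J r = 0 -> phi J = 0) ->
  \sum_(J <- mi_range n 1 k) phi J = \sum_(J <- mi_upto n r) phi J.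
Proof.
move=> r_gt0 le_r phi0; rewrite (@big_mi_range_supp _ r _ _ (k.+1 + r.+1)) //.
- apply/esym/(@big_mi_range_supp _ r 0 r.+1) => //; last exact: leq_addl.
  by rewrite add0n (leq_trans (ltnSn r)) // leq_pmulr.
- by rewrite add1n mulSn (leq_ltn_trans le_r) // -[X in (X < _)%N]add0n ltn_add2r.
- by rewrite add1n leq_addr.
Qed.

Variable a : seq nat -> seq nat -> C.

Definition fg_tail J K := if mi_le J K then (a J K)^* else 0.

Lemma pull1_delta J p : size J = n -> pull1 zeta (fun K => (K == J)%:R) p = z J p.
Proof.
move=> size_J; rewrite /pull1 big_seq_delta count_mi_upto //.
by case: leqP => [_|lt_p]; rewrite ?mul1r // zpow_eq0_deg ?mulr0.
Qed.

Lemma pull1_fser J p : size J = n ->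
  pull1 zeta (fser a J) p = z J p + pull1 zeta (fg_tail J) p.
Proof.
move=> size_J; rewrite -pull1_delta // /pull1 -big_split.
by apply: eq_bigr => K _; apply: mulrDl.
Qed.

Lemma pull1_gser J p : size J = n ->
  pull1 zeta (gser a J) p = z J p - pull1 zeta (fg_tail J) p.
Proof.
move=> size_J; rewrite -pull1_delta // /pull1 -sumrB.
by apply: eq_bigr => K _; apply: mulrBl.
Qed.

Lemma pull1_fg_tail_eq0 J p : (p < sumn J * nu)%N -> pull1 zeta (fg_tail J) p = 0.
Proof.
move=> lt_p; rewrite /pull1 big1_seq // => K /andP [_ /mem_mi_upto [size_K _]].
rewrite /fg_tail; case: ifP => [le_JK|_]; last by rewrite mul0r.
by rewrite zpow_eq0 ?mulr0 // (leq_trans lt_p) // leq_mul2r mi_le_sumn ?orbT.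
Qed.

Lemma pull1_fg_eq0 J p : size J = n -> (p < sumn J * nu)%N ->
  pull1 zeta (fser a J) p = 0 /\ pull1 zeta (gser a J) p = 0.
Proof.
move=> size_J lt_p.
by rewrite pull1_fser // pull1_gser // pull1_fg_tail_eq0 // zpow_eq0 // addr0 subr0.
Qed.

Variable h : seq nat -> C.

Lemma pull2_rser0 p : h (nseq n 0%N) = 0 -> pull2 zeta (rser h a) p 0 = pull1 zeta h p.
Proof.
move=> h0; rewrite /pull2 /pull1 /mi_upto /= deg_list0 cats0.
apply: eq_bigr => J _; rewrite big_seq1 zpow_nseq0 /sone /= rmorph1 mulr1.
by rewrite /rser sumn_nseq mul0n /= h0 rmorph0 if_same andbF !addr0.
Qed.

Definition herm_coef J K :=
  (if mi_le J K then a J K else 0) + (if mi_le K J then (a K J)^* else 0).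

Lemma pull2_rser p q : (0 < p)%N -> (0 < q)%N ->
  pull2 zeta (rser h a) p q = 2 * \sum_(J <- mi_upto n p) \sum_(K <- mi_upto n q)
    herm_coef J K * z J p * (z K q)^*.
Proof.
move=> p_gt0 q_gt0; rewrite /pull2 mulr_sumr; apply: eq_bigr => J _.
rewrite mulr_sumr; apply: eq_bigr => K _; rewrite !mulrA.
case: (eqVneq (sumn J) 0%N) => [J0|J_neq0]; first by rewrite zpow_deg0 // !(mulr0, mul0r).
case: (eqVneq (sumn K) 0%N) => [K0|K_neq0].
  by rewrite [z K q]zpow_deg0 // rmorph0 !mulr0.
by rewrite /rser (negbTE J_neq0) (negbTE K_neq0) /= !add0r -mulrDr.
Qed.

Lemma gram_fg_pull2 k p q : (0 < p)%N -> (0 < q)%N -> (p <= k * nu)%N -> (q <= k * nu)%N ->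
  \sum_(J <- mi_range n 1 k)
     (pull1 zeta (fser a J) p * (pull1 zeta (fser a J) q)^*
      - pull1 zeta (gser a J) p * (pull1 zeta (gser a J) q)^*)
  = pull2 zeta (rser h a) p q.
Proof.
move=> p_gt0 q_gt0 le_p le_q; set w := fun J r => pull1 zeta (fg_tail J) r.
rewrite (eq_big_seq (fun J => 2 * (z J p * (w J q)^* + w J p * (z J q)^*))); last first.
  move=> J /mem_mi_range [size_J _].
  by rewrite !pull1_fser // !pull1_gser // conj_polarization.
rewrite -mulr_sumr big_split pull2_rser //=; congr (_ * _).
rewrite (big_mi_range_upto p_gt0 le_p); last by move=> J _ ->; rewrite mul0r.
rewrite (big_mi_range_upto q_gt0 le_q); last by move=> J _ ->; rewrite rmorph0 mulr0.
under [X in _ + X]eq_bigr => J _ do rewrite mulr_suml.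
rewrite [X in _ + X]exchange_big -big_split; apply: eq_bigr => J _ /=.
rewrite rmorph_sum mulr_sumr -big_split; apply: eq_bigr => K _ /=.
rewrite /herm_coef /fg_tail rmorphM /= (fun_if Num.conj) conjCK rmorph0.
by rewrite !mulrDl mulrCA mulrA.
Qed.
End Pullback.
Section UnitaryCompletion.
Local Open Scope sesquilinear_scope.
Variable C : numClosedFieldType.

Lemma trmxC_mul m n p (X : 'M[C]_(m, n)) (Y : 'M[C]_(n, p)) :
  (X *m Y)^t* = Y^t* *m X^t*.
Proof. by rewrite trmx_mul map_mxM. Qed.

Lemma mulmx_trC_eq0 m n (M : 'M[C]_(m, n)) : M *m M^t* = 0 -> M = 0.
Proof.
move=> MM0; apply/matrixP => i j; rewrite mxE.
have /eqP := congr1 (fun X : 'M[C]_m => X i i) MM0; rewrite !mxE.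
rewrite psumr_eq0 => [/allP /(_ j (mem_index_enum _)) /=|l _].
  by rewrite !mxE mul_conjC_eq0 => /eqP.
by rewrite !mxE mul_conjC_ge0.
Qed.

Lemma gram_eq_mul_eq0 P N r (A B : 'M[C]_(P, N)) (Y : 'M[C]_(r, P)) :
  A *m A^t* = B *m B^t* -> Y *m B = 0 -> Y *m A = 0.
Proof.
move=> gramAB YB0; apply: mulmx_trC_eq0.
by rewrite trmxC_mul mulmxA -(mulmxA Y) gramAB mulmxA -mulmxA -trmxC_mul YB0 mul0mx.
Qed.

Lemma unitarymx_complete r N (Q : 'M[C]_(r, N)) : Q \is unitarymx ->
  exists K : 'M[C]_(N - r, N), col_mx Q K \is unitarymx.
Proof.
move=> QU; set Qo := kermx (Q^t*).
have rkQo : \rank Qo = (N - r)%N by rewrite /Qo mxrank_ker mxrank_map mxrank_tr mxrank_unitary.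
pose K := schmidt (row_base Qo).
have KU : K \is unitarymx by apply: schmidt_unitarymx; rewrite rank_leq_col.
have KQ : K *m Q^t* = 0.
  by apply/sub_kermxP; rewrite eqmx_schmidt_free ?row_base_free // eq_row_base.
have QK : Q *m K^t* = 0 by rewrite -[Q]trmxCK -trmxC_mul KQ trmx0 map_mx0.
rewrite -rkQo; exists K; apply/unitarymxP.
by rewrite tr_col_mx map_row_mx mul_col_row !(unitarymxP _) // QK KQ -scalar_mx_block.
Qed.

Lemma mul_unitary_col_mx r s N (Q : 'M[C]_(r, N)) (K : 'M[C]_(s, N)) :
  col_mx Q K \is unitarymx -> Q *m (col_mx Q K)^t* = row_mx 1%:M 0.
Proof.
rewrite tr_col_mx map_row_mx mul_mx_row => /unitarymxP.
rewrite tr_col_mx map_row_mx mul_col_row scalar_mx_block.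
by case/eq_block_mx => -> -> _ _.
Qed.

Lemma unitary_of_gram_eq P N (A B : 'M[C]_(P, N)) : A *m A^t* = B *m B^t* ->
  exists2 V : 'M[C]_N, V \is unitarymx & B *m V = A.
Proof.
move=> gramAB; pose QB := schmidt (row_base B).
have QBU : QB \is unitarymx by apply: schmidt_unitarymx; rewrite rank_leq_col.
have QB_B : (QB :=: B)%MS.
  exact: eqmx_trans (eqmx_schmidt_free (row_base_free B)) (eq_row_base B).
set X := B *m pinvmx QB; have BX : B = X *m QB by rewrite mulmxKpV // QB_B.
set Y := QB *m pinvmx B; have QBY : QB = Y *m B by rewrite mulmxKpV // QB_B.
pose QA := Y *m A.
have QAU : QA \is unitarymx.
  apply/unitarymxP; rewrite trmxC_mul mulmxA -(mulmxA Y) gramAB mulmxA.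
  by rewrite -mulmxA -trmxC_mul -QBY (unitarymxP _).
have XQA : X *m QA = A.
  have /gram_eq_mul_eq0 : (X *m Y - 1%:M) *m B = 0.
    by rewrite mulmxBl -mulmxA -QBY -BX mul1mx subrr.
  by move=> /(_ _ gramAB) /eqP; rewrite mulmxBl mul1mx subr_eq0 -mulmxA => /eqP.
have [KB WBU] := unitarymx_complete QBU.
have [KA WAU] := unitarymx_complete QAU.
exists ((col_mx QB KB)^t* *m col_mx QA KA).
  apply/unitarymxP; rewrite trmxC_mul trmxCK mulmxA -[_ *m col_mx QA KA *m _]mulmxA.
  by rewrite (unitarymxP WAU) mulmx1 -[_^t*]mul1mx mulmxKtV // subnKC // rank_leq_col.
transitivity (X *m QB *m ((col_mx QB KB)^t* *m col_mx QA KA)); first by rewrite -BX.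
by rewrite -mulmxA (mulmxA QB) mul_unitary_col_mx // mul_row_col mul1mx mul0mx addr0.
Qed.

End UnitaryCompletion.

Section Embedding.
Variables (C : numClosedFieldType) (N : nat).

Definition embed_mx (W : 'M[C]_N) : inf_matrix C := fun i j =>
  match insub i, insub j with
  | Some i', Some j' => W i' j'
  | _, _ => (i == j)%:R
  end.

Lemma embed_mxE W (i j : 'I_N) : embed_mx W i j = W i j.
Proof. by rewrite /embed_mx !valK. Qed.

Lemma embed_mx_out W i j : (N <= maxn i j)%N -> embed_mx W i j = (i == j)%:R.
Proof.
rewrite /embed_mx leq_max => /orP [le_Ni|le_Nj]; first by rewrite insubF // ltnNge le_Ni.
by case: insub => // i'; rewrite insubF // ltnNge le_Nj.
Qed.

Lemma embed_mx_tr W i j : embed_mx W^T j i = embed_mx W i j.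
Proof. by rewrite /embed_mx; case: insub => [i'|]; case: insub => [j'|]; rewrite ?mxE // eq_sym. Qed.

Lemma sum_ord_delta M i (g : nat -> C) : (i < M)%N -> \sum_(m < M) (i == m)%:R * g m = g i.
Proof.
move=> lt_iM; rewrite -(big_mkord xpredT (fun m => (i == m)%:R * g m)).
under eq_bigr => m _ do rewrite eq_sym.
by rewrite big_seq_delta count_uniq_mem ?iota_uniq // mem_index_iota lt_iM mul1r.
Qed.

Lemma embed_mx_mulC W M i l : W \is unitarymx -> (N <= M)%N -> (i < M)%N -> (l < M)%N ->
  \sum_(m < M) embed_mx W i m * (embed_mx W l m)^* = (i == l)%:R.
Proof.
move=> /unitarymxP WU le_NM lt_iM lt_lM.
case: (leqP N i) => [le_Ni|lt_iN].
  under eq_bigr => m _ do rewrite embed_mx_out ?leq_max ?le_Ni //.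
  by rewrite (sum_ord_delta (fun m => (embed_mx W l m)^*)) // embed_mx_out ?leq_max ?le_Ni ?orbT // conjC_nat eq_sym.
case: (leqP N l) => [le_Nl|lt_lN].
  under eq_bigr => m _ do rewrite [embed_mx W l m]embed_mx_out ?leq_max ?le_Nl // conjC_nat mulrC.
  by rewrite (sum_ord_delta (embed_mx W i)) // embed_mx_out // leq_max le_Nl orbT.
rewrite (bigID (fun m : 'I_M => (m < N)%N)) /= [X in _ + X]big1 ?addr0; last first.
  move=> m; rewrite -leqNgt => le_Nm.
  by rewrite embed_mx_out ?leq_max ?le_Nm ?orbT // ltn_eqF ?mul0r // (leq_trans lt_iN).
rewrite -(big_ord_widen _ (fun m => embed_mx W i m * (embed_mx W l m)^*) le_NM).
have := congr1 (fun X : 'M[C]_N => X (Ordinal lt_iN) (Ordinal lt_lN)) WU.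
rewrite !mxE /= => <-; apply: eq_bigr => m _.
by rewrite (embed_mxE W (Ordinal lt_iN)) (embed_mxE W (Ordinal lt_lN)) !mxE.
Qed.

Lemma embed_mx_M1N W : W \is unitarymx -> in_M1N N (embed_mx W).
Proof.
move=> WU; split; first exact: embed_mx_out.
have le_N (i l : nat) : (N <= maxn N (maxn i l).+1)%N by apply: leq_maxl.
have lt_i (i l : nat) : (i < maxn N (maxn i l).+1)%N by rewrite leq_max ltnS leq_maxl orbT.
have lt_l (i l : nat) : (l < maxn N (maxn i l).+1)%N by rewrite leq_max ltnS leq_maxr orbT.
split=> i l; first exact: embed_mx_mulC.
under eq_bigr => m _ do rewrite -!(embed_mx_tr W) mulrC.
by rewrite embed_mx_mulC ?trmx_unitary // eq_sym.
Qed.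
End Embedding.

Lemma pull1_fUg (C : numClosedFieldType) n (zeta : 'I_n -> nat -> C) a N U i p :
  pull1 zeta (fUg n a N U i) p = pull1 zeta (fser a (mi_enum n i)) p
   - \sum_(m < maxn N i.+1) U i m * pull1 zeta (gser a (mi_enum n m)) p.
Proof.
rewrite /pull1 /fUg; under eq_bigr => K _ do rewrite mulrBl.
rewrite sumrB; congr (_ - _); under eq_bigr => K _ do rewrite mulr_suml.
rewrite exchange_big; apply: eq_bigr => m _; rewrite mulr_sumr.
by apply: eq_bigr => K _; rewrite mulrA.
Qed.

Section Jets.
Local Open Scope sesquilinear_scope.
Variables (C : numClosedFieldType) (n : nat) (zeta : 'I_n -> nat -> C) (nu k : nat).
Hypothesis n_gt0 : (0 < n)%N.
Hypothesis zeta_vanish : forall i, vanish_below (zeta i) nu.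
Hypothesis nu_gt0 : (0 < nu)%N.
Variables (h : seq nat -> C) (a : seq nat -> seq nat -> C).

Local Notation E := (mi_range n 1 k).
Local Notation N := (size E).
Local Notation D := (k * nu)%N.

Definition jet_mx (F : seq nat -> seq nat -> C) : 'M[C]_(D.+1, N) :=
  \matrix_(p < D.+1, i < N) pull1 zeta (F (nth [::] E i)) p.

Lemma jet_mx_gramE F (p q : 'I_D.+1) : (jet_mx F *m (jet_mx F)^t*) p q =
  \sum_(J <- E) pull1 zeta (F J) p * (pull1 zeta (F J) q)^*.
Proof. by rewrite !mxE (big_nth [::]) big_mkord; apply: eq_bigr => i _; rewrite !mxE. Qed.

Lemma jet_mx_gram_eq :
  (forall p q, (p + q <= 2 * k * nu)%N -> pull2 zeta (rser h a) p q = 0) ->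
  jet_mx (fser a) *m (jet_mx (fser a))^t* = jet_mx (gser a) *m (jet_mx (gser a))^t*.
Proof.
move=> r0; apply/matrixP => p q; rewrite !jet_mx_gramE.
apply/eqP; rewrite -subr_eq0 -sumrB; apply/eqP.
have fg0 J r : J \in E -> r = 0%N ->
    pull1 zeta (fser a J) r = 0 /\ pull1 zeta (gser a J) r = 0.
  case/mem_mi_range => size_J /andP [deg_J _] ->.
  by apply: pull1_fg_eq0; rewrite // muln_gt0 deg_J.
have [p0|p_gt0] := posnP p.
  by rewrite big1_seq // => J /andP [_ /fg0 /(_ p0) [-> ->]]; rewrite !mul0r subrr.
have [q0|q_gt0] := posnP q.
  by rewrite big1_seq // => J /andP [_ /fg0 /(_ q0) [-> ->]]; rewrite rmorph0 !mulr0 subrr.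
have le_p : (p <= D)%N by rewrite -ltnS.
have le_q : (q <= D)%N by rewrite -ltnS.
by rewrite (gram_fg_pull2 zeta_vanish nu_gt0 a h) // r0 // -mulnA mul2n -addnn leq_add.
Qed.

Lemma pull1_fUg_eq0 (W : 'M[C]_N) : jet_mx (gser a) *m W = jet_mx (fser a) ->
  forall i p, (p <= D)%N -> pull1 zeta (fUg n a N (embed_mx W^T) i) p = 0.
Proof.
move=> GW i p le_p; rewrite pull1_fUg; apply/eqP; rewrite subr_eq0; apply/eqP.
case: (ltnP i N) => [lt_iN|le_Ni].
  rewrite (maxn_idPl lt_iN) (mi_enum_nth n_gt0 lt_iN).
  have := congr1 (fun X : 'M[C]_(D.+1, N) => X (Ordinal (le_p : (p < D.+1)%N)) (Ordinal lt_iN)) GW.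
  rewrite !mxE => <-; apply: eq_bigr => m _.
  by rewrite !mxE (mi_enum_nth n_gt0 (ltn_ord m)) (embed_mxE W^T (Ordinal lt_iN)) mxE mulrC.
rewrite (maxn_idPr (leqW le_Ni)).
under eq_bigr => m _ do rewrite embed_mx_out ?leq_max ?le_Ni //.
rewrite (sum_ord_delta (fun m => pull1 zeta (gser a (mi_enum n m)) p)) //.
have [size_i lt_k] := mi_enum_gt n_gt0 le_Ni.
have lt_p : (p < sumn (mi_enum n i) * nu)%N.
  by rewrite (leq_ltn_trans le_p) // (leq_trans _ (leq_mul lt_k (leqnn nu))) // mulSn -addn1 addnC leq_add2r.
by have [-> ->] := pull1_fg_eq0 zeta_vanish nu_gt0 a size_i lt_p.
Qed.

End Jets.

Theorem mainTheorem3 (C : numClosedFieldType) (n : nat)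
    (h : seq nat -> C) (a : seq nat -> seq nat -> C)
    (zeta : 'I_n -> nat -> C) (nu k : nat) :
  (* h(0) = 0, hence r(0) = 0 *)
  h (nseq n 0%N) = 0 ->
  (* dr(0) <> 0 : some first-order Taylor coefficient of r is nonzero *)
  (exists J K : seq nat, size J = n /\ size K = n /\ (sumn J + sumn K = 1)%N
                         /\ rser h a J K != 0) ->
  (* zeta(0) = 0 and zeta nonconstant *)
  (forall i, zeta i 0%N = 0) ->
  (exists i p, zeta i p != 0) ->
  vanishing_order zeta nu ->
  (1 <= k)%N ->
  (* j_{2 k nu}(zeta^* r) = 0 *)
  (forall p q, (p + q <= 2 * k * nu)%N -> pull2 zeta (rser h a) p q = 0) ->
  exists (N : nat) (U : inf_matrix C),
    in_M1N N U
    /\ (forall p, (p <= 2 * k * nu)%N -> pull1 zeta h p = 0)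
    /\ (forall i p, (p <= k * nu)%N -> pull1 zeta (fUg n a N U i) p = 0).
Proof.
move=> h0 _ zeta0 _ [[i0 zeta_nu] zeta_vanish] _ r0.
have n_gt0 : (0 < n)%N := leq_ltn_trans (leq0n i0) (ltn_ord i0).
have nu_gt0 : (0 < nu)%N by case: nu zeta_nu {zeta_vanish r0} => //; rewrite zeta0 eqxx.
have [V VU GV] := unitary_of_gram_eq (jet_mx_gram_eq zeta_vanish nu_gt0 r0).
exists (size (mi_range n 1 k)), (embed_mx V^T); split.
  by apply: embed_mx_M1N; rewrite trmx_unitary.
split; last exact: pull1_fUg_eq0.
by move=> p le_p; rewrite -(pull2_rser0 zeta a p h0) r0 // addn0.
Qed.
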